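(* For any multigraph $G$, $|P(\mathcal{H}_G,-1)|=T_G(0,2)$, and this number equals the number of totally cyclic orientations of $G$.
   Context: A hypergraph $\mathcal{H}=(\mathcal{V},\mathcal{E})$ consists of a finite vertex set $\mathcal{V}$ and a set $\mathcal{E}$ of subsets of $\mathcal{V}$, each of size at least $1$, called edges. For a positive integer $\lambda$, a weak proper $\lambda$-colouring of $\mathcal{H}$ is a map $\phi:\mathcal{V}\to\{1,\dots,\lambda\}$ such that $|\{\phi(v):v\in e\}|>1$ for every $e\in\mathcal{E}$. $P(\mathcal{H},\lambda)$ denotes the number of weak proper $\lambda$-colourings of $\mathcal{H}$; it is a polynomial in $\lambda$, evaluated at $\lambda=-1$ as a polynomial. For a multigraph $G=(V,E)$ (loops and parallel edges allowed), $\mathcal{H}_G$ is the hypergraph with vertex set $V\cup\{w_e:e\in E\}$ (distinct new vertices $w_e$) and edge set $\{\{u_e,v_e,w_e\}: e\in E\}$, where $u_e,v_e$ are the ends of $e$. The Tutte polynomial is $T_G(x,y)=\sum_{A\subseteq E}(x-1)^{r(E)-r(A)}(y-1)^{|A|-r(A)}$ with $r(A)=|V|-c(A)$, $c(A)$ the number of components of $(V,A)$. A totally cyclic orientation of $G$ is an orientation in which every arc lies in some directed cycle. *)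

From HB Require Import structures.
From mathcomp Require Import all_boot all_order all_algebra.
Set Implicit Arguments. Unset Strict Implicit. Unset Printing Implicit Defensive.
Import Order.TTheory GRing.Theory Num.Theory.

Definition weak_proper (W I : finType) (hedge : I -> {set W}) (lam : nat)
  (phi : {ffun W -> 'I_lam}) : bool :=
  [forall i, 1 < #|phi @: hedge i|].

Definition num_weak_col (W I : finType) (hedge : I -> {set W}) (lam : nat) : nat :=
  #|[pred phi : {ffun W -> 'I_lam} | weak_proper hedge phi]|.

(* A multigraph G = (V, E) is given by finite types V, E and a map
   ends : E -> V * V giving the two ends (u_e, v_e) of each edge
   (loops: u_e = v_e; parallel edges: distinct e with the same ends). *)

(* The hypergraph H_G: vertex set V + E (w_e = inr e), edges {u_e, v_e, w_e}. *)
Definition HG_edge (V E : finType) (ends : E -> V * V) (e : E) : {set V + E} :=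
  [set inl (ends e).1; inl (ends e).2; inr e].

Definition adjA (V E : finType) (ends : E -> V * V) (A : {set E}) : rel V :=
  fun u v => [exists e in A, (ends e == (u, v)) || (ends e == (v, u))].

Definition ncomp (V E : finType) (ends : E -> V * V) (A : {set E}) : nat :=
  #|[set [set y | connect (adjA ends A) x y] | x : V]|.

Definition rk (V E : finType) (ends : E -> V * V) (A : {set E}) : nat :=
  #|V| - ncomp ends A.

Definition tutte (V E : finType) (ends : E -> V * V) (R : pzRingType) (x y : R) : R :=
  \sum_(A : {set E})
     (x - 1) ^+ (rk ends setT - rk ends A) * (y - 1) ^+ (#|A| - rk ends A).

(* An orientation assigns to each edge a direction: o e = true means
   u_e -> v_e, o e = false means v_e -> u_e (loops get two orientations,
   as usual). *)
Definition otail (V E : finType) (ends : E -> V * V) (o : {ffun E -> bool}) (e : E) : V :=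
  if o e then (ends e).1 else (ends e).2.
Definition ohead (V E : finType) (ends : E -> V * V) (o : {ffun E -> bool}) (e : E) : V :=
  if o e then (ends e).2 else (ends e).1.

Definition dir_cycle (V E : finType) (ends : E -> V * V) (o : {ffun E -> bool})
  (s : seq E) : bool :=
  [&& s != [::], uniq (map (otail ends o) s) &
      cycle (fun a b => ohead ends o a == otail ends o b) s].

(* Since the tail vertices of a directed
   cycle are distinct, so are its arcs, hence its length is at most #|E|;
   this lets us quantify over bounded tuples and obtain a boolean. *)
Definition arc_in_dir_cycle (V E : finType) (ends : E -> V * V)
  (o : {ffun E -> bool}) (e : E) : bool :=
  [exists n : 'I_#|E|.+1, [exists t : n.-tuple E,
     (e \in val t) && dir_cycle ends o (val t)]].

Definition totally_cyclic (V E : finType) (ends : E -> V * V) (o : {ffun E -> bool}) : bool :=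
  [forall e, arc_in_dir_cycle ends o e].

Definition num_tco (V E : finType) (ends : E -> V * V) : nat :=
  #|[pred o : {ffun E -> bool} | totally_cyclic ends o]|.

From Pilot Require Import Defs.
From HB Require Import structures.
From mathcomp Require Import all_boot all_order all_algebra.
From mathcomp Require Import zify.
Import Order.TTheory GRing.Theory Num.Theory.
Set Implicit Arguments. Unset Strict Implicit. Unset Printing Implicit Defensive.

(* Once a colouring f of the original vertices is fixed, w_e has
   lam - [f u_e = f v_e] admissible colours; expanding the product over the edges gives
   P(H_G, lam) = sum_{A subset E} (-1)^|A| lam^(|E| - |A| + c(A)).  At lam = -1 the
   term of A has sign (-1)^(|E| + c(A)), while its term in T_G(0,2) has sign
   (-1)^(r(E) - r(A)) = (-1)^(c(A) + c(E)), so the two sums agree up to a global sign.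

   T_G(0,2) is identified with the number of totally cyclic orientations by
   deletion-contraction on mixed graphs: the edges of S are oriented, the edges of
   C may be traversed both ways (they play the part of contracted edges), and
   sum_{A subset S} (-1)^(c(A + C) + c(S + C)) counts the orientations of S in
   which every arc can be closed up to a cycle.  For e in S both sides vanish when
   e is a bridge of S + C; otherwise both obey f(S, C) = f(S - e, C) + f(S - e, C + e),
   since among the two orientations of e exactly as many are cyclic as among
   "e deleted" and "e usable both ways". *)

Lemma card_pred_sum (T : finType) (P : pred T) : #|[pred x | P x]| = \sum_x P x.
Proof. by rewrite -sum1_card big_mkcond; apply: eq_bigr => x _; rewrite inE; case: (P x). Qed.

Lemma forall_prod (I : finType) (P : pred I) : [forall i, P i] = \prod_i P i :> nat.
Proof.
have [/forallP allP | ] := boolP [forall i, P i]; first by rewrite big1 // => i _; rewrite allP.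
by rewrite negb_forall => /existsP [i Pi]; rewrite (bigD1 i) //= (negbTE Pi).
Qed.

Lemma card_imset3_gt1 (T L : finType) (phi : T -> L) a b c :
  (1 < #|phi @: [set a; b; c]|) = ~~ ((phi a == phi c) && (phi b == phi c)).
Proof.
apply/card_gt1P/negP => [[x [y [Hx Hy xy]]] /andP [/eqP ac /eqP bc] | not_const].
  have im_c w : w \in phi @: [set a; b; c] -> w = phi c.
    by case/imsetP => t; rewrite !inE -orbA => /or3P [] /eqP -> ->.
  by move: xy; rewrite (im_c _ Hx) (im_c _ Hy) eqxx.
have [ac | ac] := eqVneq (phi a) (phi c).
  have [bc | bc] := eqVneq (phi b) (phi c); first by case: not_const; rewrite ac bc eqxx.
  by exists (phi b), (phi c); split => //; apply: imset_f; rewrite !inE eqxx ?orbT.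
by exists (phi a), (phi c); split => //; apply: imset_f; rewrite !inE eqxx ?orbT.
Qed.

Lemma sum_ord_not_both_eq lam (a b : 'I_lam) :
  \sum_(c : 'I_lam) ~~ ((a == c) && (b == c)) = lam - (a == b).
Proof.
have [<- | ab] := eqVneq a b.
  rewrite subn1 -[X in X.-1](card_ord lam) -(cardC1 a) -sum1_card [RHS]big_mkcond /=.
  by apply: eq_bigr => c _; rewrite inE andbb eq_sym; case: (c != a).
rewrite subn0 -[RHS](card_ord lam) -sum1_card; apply: eq_bigr => c _.
by have [ac | //] := eqVneq a c; have [bc | //] := eqVneq b c; case/eqP: ab; rewrite ac bc.
Qed.

Lemma sum_subset_setD1 (R : nmodType) (T : finType) (G : {set T} -> R) (S : {set T}) e :
  e \in S -> (\sum_(A : {set T} | A \subset S) G A =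
               \sum_(A : {set T} | A \subset S :\ e) (G A + G (e |: A)))%R.
Proof.
move=> eS; rewrite big_split /= [LHS](bigID (fun A : {set T} => e \in A)) /= addrC.
congr (_ + _)%R.
  by apply: eq_bigl => A; rewrite subsetD1.
rewrite (reindex_onto (fun B => e |: B) (fun A => A :\ e)) /=; last first.
  by move=> A /andP [_ eA]; rewrite setD1K.
apply: eq_bigl => B; rewrite subsetD1 subUset sub1set eS setU11 /= andbT.
have [eB | eB] /= := boolP (e \in B); last by rewrite setU1K // eqxx andbT.
rewrite andbF; apply/negbTE/negP => /andP [_ /eqP /setP /(_ e)].
by rewrite !inE eqxx eB.
Qed.

Lemma signr_odd_eq (R : pzRingType) m n : odd m = odd n -> ((-1 : R) ^+ m = (-1) ^+ n)%R.
Proof. by move=> mn; rewrite -[LHS]signr_odd mn signr_odd. Qed.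

Section AddArc.
Variable T : finType.
Implicit Types (R : rel T) (a b u v x y : T).

Definition add_arc R a b : rel T := fun x y => R x y || (a == x) && (b == y).

Lemma add_arcC R a b u v : add_arc (add_arc R a b) u v =2 add_arc (add_arc R u v) a b.
Proof. by move=> x y; rewrite /add_arc -!orbA [(_ && _) || _]orbC. Qed.

Lemma connect_add_arcW R a b x y : connect R x y -> connect (add_arc R a b) x y.
Proof. by apply: connect_sub => x' y' Rxy; apply: connect1; rewrite /add_arc Rxy. Qed.

Lemma connect_add_arc R a b x y :
  connect (add_arc R a b) x y -> connect R x y || connect R x a && connect R b y.
Proof.
case/connectP => p; elim: p x => [|z p IH] x /=; first by move=> _ ->; rewrite connect0.
case/andP => /orP [Rxz | /andP [/eqP <- /eqP <-]] /IH {}IH /IH /orP [zy | /andP [za b_y]].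
- by rewrite (connect_trans (connect1 Rxz) zy).
- by rewrite (connect_trans (connect1 Rxz) za) b_y orbT.
- by rewrite zy connect0 orbT.
- by rewrite b_y connect0 orbT.
Qed.

Lemma connect_add_arc_rev R a b : connect (add_arc R a b) b a = connect R b a.
Proof.
apply/idP/idP; last exact: connect_add_arcW.
by case/connect_add_arc/orP => // /andP [].
Qed.

Lemma connect_add_arc_id R a b : connect R a b -> connect (add_arc R a b) =2 connect R.
Proof.
move=> Rab x y; apply/idP/idP; last exact: connect_add_arcW.
case/connect_add_arc/orP => // /andP [xa b_y].
exact: connect_trans xa (connect_trans Rab b_y).
Qed.

End AddArc.

Section CyclicArcs.
Variables (T I : finType) (arc : pred I) (tl hd : I -> T).
Implicit Types (R : rel T) (u v : T).

Definition cyclic_arcs R := [forall i in arc, connect R (hd i) (tl i)].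

Lemma eq_cyclic_arcs R1 R2 : R1 =2 R2 -> cyclic_arcs R1 = cyclic_arcs R2.
Proof. by move=> R12; apply: eq_forallb_in => i _; rewrite (eq_connect R12). Qed.

Lemma cyclic_arcs_connect_sub R1 R2 :
  (forall x y, R1 x y -> connect R2 x y) -> cyclic_arcs R1 -> cyclic_arcs R2.
Proof. by move=> R12 /forall_inP back; apply/forall_inP => i /back; apply: connect_sub. Qed.

Lemma cyclic_arcs_add_arc R u v : cyclic_arcs R -> cyclic_arcs (add_arc R u v).
Proof. by apply: cyclic_arcs_connect_sub => x y Rxy; apply/connect_add_arcW/connect1. Qed.

Lemma cyclic_arcs_add_arc_id R u v : connect R u v -> cyclic_arcs (add_arc R u v) = cyclic_arcs R.
Proof. by move=> Ruv; apply: eq_forallb_in => i _; rewrite connect_add_arc_id. Qed.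

(* A return path using the new edge would give a path between u and v in R,
   closed up through the arc i. *)
Lemma cyclic_arcs_add_arcs_disconnected R u v :
  {in arc, forall i, R (tl i) (hd i)} -> ~~ connect R u v -> ~~ connect R v u ->
  cyclic_arcs (add_arc (add_arc R u v) v u) -> cyclic_arcs R.
Proof.
move=> arcR not_uv not_vu /forall_inP back; apply/forall_inP => i arc_i.
have tl_hd := connect1 (arcR i arc_i).
case/connect_add_arc/orP: (back i arc_i) => [| /andP [hv ut]].
  case/connect_add_arc/orP => // /andP [hu vt].
  by case/negP: not_vu; apply: connect_trans (connect_trans vt tl_hd) hu.
case/connect_add_arc/orP: hv => [hv | /andP [hu _]];
  case/connect_add_arc/orP: ut => [ut | /andP [_ vt]].
- by case/negP: not_uv; apply: connect_trans (connect_trans ut tl_hd) hv.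
- exact: connect_trans hv vt.
- exact: connect_trans hu ut.
- by case/negP: not_vu; apply: connect_trans (connect_trans vt tl_hd) hu.
Qed.

(* Deletion-contraction for cyclic orientations: the two orientations of a new
   edge uv against leaving it out or making it usable both ways. *)
Lemma cyclic_arcs_orient_new_edge R u v :
  {in arc, forall i, R (tl i) (hd i)} ->
  (cyclic_arcs R -> connect R u v && connect R v u) ->
  (cyclic_arcs (add_arc R u v) && connect (add_arc R u v) v u) +
  (cyclic_arcs (add_arc R v u) && connect (add_arc R v u) u v) =
  cyclic_arcs R + cyclic_arcs (add_arc (add_arc R u v) v u) :> nat.
Proof.
move=> arcR strong_uv; rewrite !connect_add_arc_rev.
set R2 := add_arc (add_arc R u v) v u.
have R2C : cyclic_arcs R2 = cyclic_arcs (add_arc (add_arc R v u) u v).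
  exact: eq_cyclic_arcs (add_arcC R u v v u).
have [cycR | not_cycR] := boolP (cyclic_arcs R).
  have /andP [uv vu] := strong_uv cycR.
  by rewrite !cyclic_arcs_add_arc // uv vu.
have [vu | not_vu] := boolP (connect R v u); have [uv | not_uv] := boolP (connect R u v).
- by rewrite /R2 !cyclic_arcs_add_arc_id ?connect_add_arcW // (negbTE not_cycR).
- by rewrite andbF addn0 /R2 (cyclic_arcs_add_arc_id (connect_add_arcW _ _ vu)) andbT.
- by rewrite andbF R2C (cyclic_arcs_add_arc_id (connect_add_arcW _ _ uv)) andbT.
- rewrite !andbF; apply/esym/eqP; rewrite eqb0.
  exact: contra (cyclic_arcs_add_arcs_disconnected arcR not_uv not_vu) not_cycR.
Qed.

End CyclicArcs.

Arguments eq_cyclic_arcs {T I arc tl hd R1 R2}.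

Section SpanningSubgraphs.
Variables (V E : finType) (ends : E -> V * V).
Implicit Types (F : {set E}) (e : E) (x y : V).

Lemma adjA_sym F : symmetric (adjA ends F).
Proof. by move=> x y; apply/existsP/existsP => -[e He]; exists e; rewrite orbC. Qed.

Lemma connect_adjA_sym F : connect_sym (adjA ends F).
Proof. exact/sym_connect_sym/adjA_sym. Qed.

Lemma adjA_ends F e : e \in F -> adjA ends F (ends e).1 (ends e).2.
Proof. by move=> eF; apply/existsP; exists e; rewrite eF -surjective_pairing eqxx. Qed.

Lemma connect_adjA_subset F1 F2 x y :
  F1 \subset F2 -> connect (adjA ends F1) x y -> connect (adjA ends F2) x y.
Proof.
move=> /subsetP sF12; apply: connect_sub => a b /existsP [e /andP [eF Hab]].
by apply/connect1/existsP; exists e; rewrite sF12.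
Qed.

Lemma adjA_setU1 F e : adjA ends (e |: F) =2
  add_arc (add_arc (adjA ends F) (ends e).1 (ends e).2) (ends e).2 (ends e).1.
Proof.
move=> x y; rewrite /add_arc -orbA.
have -> : (((ends e).1 == x) && ((ends e).2 == y)) || (((ends e).2 == x) && ((ends e).1 == y))
        = (ends e == (x, y)) || (ends e == (y, x)).
  by case: (ends e) => u v; rewrite /= !xpair_eqE [(v == x) && _]andbC.
apply/existsP/orP => [[a] | [/existsP [a /andP [aF Hxy]] | eHxy]].
- rewrite in_setU1 => /andP [/orP [/eqP -> | aF] Hxy]; [by right | left].
  by apply/existsP; exists a; rewrite aF.
- by exists a; rewrite in_setU1 aF orbT.
- by exists e; rewrite setU11.
Qed.

Definition edge_constant (L : finType) F (f : {ffun V -> L}) :=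
  [forall e in F, f (ends e).1 == f (ends e).2].

Lemma edge_constant_connect (L : finType) F (f : {ffun V -> L}) x y :
  edge_constant F f -> connect (adjA ends F) x y -> f x = f y.
Proof.
move=> /forall_inP fF /connectP [p Hp ->]; elim: p x Hp => //= z p IH x /andP [Hxz Hp].
rewrite -(IH _ Hp); case/existsP: Hxz => e /andP [eF He].
by have := eqP (fF e eF); case/orP: He => /eqP -> /= ->.
Qed.

Lemma edge_constant_setU1 (L : finType) F e (f : {ffun V -> L}) :
  edge_constant (e |: F) f = edge_constant F f && (f (ends e).1 == f (ends e).2).
Proof.
apply/forall_inP/andP => [fF | [/forall_inP fF fe] a].
  by split; [apply/forall_inP => a aF; apply: fF; rewrite setU1r | apply: fF; rewrite setU11].
by rewrite in_setU1 => /orP [/eqP -> | /fF].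
Qed.

Definition component F x := [set y | connect (adjA ends F) x y].

Lemma component_eq F x y : connect (adjA ends F) x y -> component F x = component F y.
Proof.
move=> Hxy; apply/setP => z; rewrite !inE; apply/idP/idP; last exact: connect_trans.
by apply: connect_trans; rewrite connect_adjA_sym.
Qed.

(* An edge-constant colouring is the same as a colouring of the components. *)
Lemma card_edge_constant (L : finType) F :
  #|[pred f : {ffun V -> L} | edge_constant F f]| = #|L| ^ ncomp ends F.
Proof.
pose K := {X : {set V} | X \in [set component F x | x : V]}.
have compK x : component F x \in [set component F x | x : V] by apply: imset_f.
pose comp_of x : K := exist _ (component F x) (compK x).
pose lift (g : {ffun K -> L}) : {ffun V -> L} := [ffun x => g (comp_of x)].
have lift_inj : injective lift.
  move=> g1 g2 /ffunP eq_g; apply/ffunP => -[X HX].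
  have /imsetP [x _ HXx] := HX.
  have -> : exist _ X HX = comp_of x by apply: val_inj.
  by have := eq_g x; rewrite !ffunE.
have im_lift : [pred f : {ffun V -> L} | edge_constant F f] =i lift @: setT.
  move=> f; rewrite inE; apply/idP/imsetP => [fF | [g _ ->]].
    have memX (X : K) : exists y, y \in val X.
      by case: X => X /= /imsetP [x _ ->]; exists x; rewrite inE connect0.
    exists [ffun X => f (xchoose (memX X))] => //; apply/ffunP => x; rewrite !ffunE.
    by apply: (edge_constant_connect fF); have := xchooseP (memX (comp_of x)); rewrite inE.
  apply/forall_inP => e eF; rewrite !ffunE; apply/eqP; congr (g _); apply: val_inj.
  exact/component_eq/connect1/adjA_ends.
rewrite (eq_card im_lift) card_imset // cardsT card_ffun card_sig /ncomp.
by congr (_ ^ _); apply: eq_card => X; rewrite !inE.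
Qed.

Lemma card_edge_constant_bool F :
  #|[pred f : {ffun V -> bool} | edge_constant F f]| = 2 ^ ncomp ends F.
Proof. by rewrite card_edge_constant card_bool. Qed.

Lemma ncomp_le_card F : ncomp ends F <= #|V|.
Proof.
have := max_card [pred f : {ffun V -> bool} | edge_constant F f].
by rewrite card_edge_constant_bool card_ffun card_bool leq_exp2l.
Qed.

Lemma ncomp_subset F1 F2 : F1 \subset F2 -> ncomp ends F2 <= ncomp ends F1.
Proof.
move=> /subsetP sF12; rewrite -(@leq_exp2l 2) // -!card_edge_constant_bool.
apply/subset_leq_card/subsetP => f; rewrite !inE => /forall_inP fF.
by apply/forall_inP => e /sF12 /fF.
Qed.

Lemma ncomp_setU1_connect F e :
  connect (adjA ends F) (ends e).1 (ends e).2 -> ncomp ends (e |: F) = ncomp ends F.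
Proof.
move=> Hc; apply/eqP; rewrite -(@eqn_exp2l 2) // -!card_edge_constant_bool.
apply/eqP/eq_card => f; rewrite !inE edge_constant_setU1.
by case fF: (edge_constant F f); rewrite //= (edge_constant_connect fF Hc) eqxx.
Qed.

(* Flipping the colours on the component of v_e matches the two-colourings
   that agree on the ends of e with those that do not. *)
Lemma ncomp_setU1_bridge F e :
  ~~ connect (adjA ends F) (ends e).1 (ends e).2 ->
  ncomp ends F = (ncomp ends (e |: F)).+1.
Proof.
set u := (ends e).1; set v := (ends e).2 => not_uv.
pose flip (f : {ffun V -> bool}) : {ffun V -> bool} :=
  [ffun x => (x \in component F v) (+) f x].
have flipK : involutive flip.
  by move=> f; apply/ffunP => x; rewrite !ffunE addbA addbb.
have flip_constant f : edge_constant F (flip f) = edge_constant F f.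
  apply: eq_forallb_in => a aF; rewrite !ffunE.
  have -> : ((ends a).2 \in component F v) = ((ends a).1 \in component F v).
    by rewrite !inE; apply: same_connect_r; [apply: connect_adjA_sym |
       rewrite connect_adjA_sym; apply/connect1/adjA_ends].
  by case: (_ \in _); rewrite ?addFb // !addTb (inj_eq negb_inj).
have flip_uv f : (flip f u == flip f v) = (f u != f v).
  have u_out : u \notin component F v by rewrite inE connect_adjA_sym.
  have v_in : v \in component F v by rewrite inE connect0.
  by rewrite !ffunE (negbTE u_out) v_in addFb addTb; case: (f u); case: (f v).
apply/eqP; rewrite -(@eqn_exp2l 2) // expnS mul2n -addnn -!card_edge_constant_bool.
rewrite card_pred_sum (bigID (fun f : {ffun V -> bool} => f u == f v)) /=.
have agree_sum : \sum_(f : {ffun V -> bool} | f u == f v) edge_constant F f =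
                 #|[pred f : {ffun V -> bool} | edge_constant (e |: F) f]|.
  rewrite card_pred_sum [LHS]big_mkcond /=; apply: eq_bigr => f _.
  by rewrite edge_constant_setU1; case: (f u == f v); rewrite ?andbT ?andbF.
rewrite -agree_sum eqn_add2l (reindex_inj (inv_inj flipK)) /= !big_mkcond /=.
apply/eqP; rewrite [RHS]big_mkcond; apply: eq_bigr => f _.
by rewrite flip_uv flip_constant negbK.
Qed.

End SpanningSubgraphs.

Section WeakColourings.
Variables (V E : finType) (ends : E -> V * V).

(* Split phi into its restrictions f to V and g to E: for fixed f the
   constraints on the colours g e are independent, and edge e leaves
   lam - [f u_e = f v_e] admissible colours for w_e. *)
Lemma num_weak_col_HG lam : num_weak_col (HG_edge ends) lam =
  \sum_(f : {ffun V -> 'I_lam}) \prod_(e : E) (lam - (f (ends e).1 == f (ends e).2)).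
Proof.
pose join (fg : {ffun V -> 'I_lam} * {ffun E -> 'I_lam}) : {ffun V + E -> 'I_lam} :=
  [ffun w => match w with inl x => fg.1 x | inr e => fg.2 e end].
pose split (phi : {ffun V + E -> 'I_lam}) := ([ffun x => phi (inl x)], [ffun e => phi (inr e)]).
have splitK : cancel join split.
  by case=> f g; congr (_, _); apply/ffunP => x; rewrite !ffunE.
have joinK : cancel split join by move=> phi; apply/ffunP => -[x | e]; rewrite !ffunE.
rewrite /num_weak_col card_pred_sum (reindex join); last by apply: onW_bij; exists split.
rewrite -(pair_bigA _ (fun f g => weak_proper (HG_edge ends) (join (f, g)) : nat)) /=.
apply: eq_bigr => f _.
have weak_join g : weak_proper (HG_edge ends) (join (f, g)) =
    [forall e, ~~ ((f (ends e).1 == g e) && (f (ends e).2 == g e))].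
  by apply: eq_forallb => e; rewrite /HG_edge card_imset3_gt1 !ffunE.
under eq_bigr => g _ do rewrite weak_join forall_prod.
rewrite -(bigA_distr_bigA (fun e c => ~~ ((f (ends e).1 == c) && (f (ends e).2 == c)) : nat)).
by apply: eq_bigr => e _; rewrite sum_ord_not_both_eq.
Qed.

Local Open Scope ring_scope.

Lemma num_weak_col_HG_expand lam : (0 < lam)%N ->
  (num_weak_col (HG_edge ends) lam)%:Z =
  \sum_(A : {set E}) (-1) ^+ #|A| * lam%:Z ^+ (#|E| - #|A| + ncomp ends A).
Proof.
move=> lam_gt0; rewrite num_weak_col_HG (big_morph Posz PoszD (erefl _)).
under eq_bigr => f _.
  rewrite (big_morph Posz PoszM (erefl _)).
  under eq_bigr => e _ do rewrite -subzn ?(leq_trans (leq_b1 _) lam_gt0) // addrC.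
  rewrite bigA_distr.
  over.
rewrite /= exchange_big /=; apply: eq_bigr => A _.
have expand_A (f : {ffun V -> 'I_lam}) :
    \prod_(e : E) (if e \in A then - (f (ends e).1 == f (ends e).2)%:Z else lam%:Z) =
    (-1) ^+ #|A| * lam%:Z ^+ (#|E| - #|A|) * (edge_constant ends A f)%:Z.
  rewrite (bigID (mem A)) /= (eq_bigr (fun e => - (f (ends e).1 == f (ends e).2)%:Z));
    last by move=> e ->.
  rewrite [X in _ * X](eq_bigr (fun e => lam%:Z)); last by move=> e /negbTE ->.
  rewrite prodrN [X in _ * X](eq_bigl (mem (~: A))); last by move=> e; rewrite !inE.
  rewrite prodr_const -(cardsC A) addKn mulrAC; congr (_ * _).
  have [/forall_inP Af | ] := boolP (edge_constant ends A f).
    by rewrite big1 // => e eA; rewrite Af.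
  rewrite negb_forall_in => /existsP [e /andP [eA ne]].
  by rewrite (bigD1 e) //= (negbTE ne) mul0r.
rewrite (eq_bigr _ (fun f _ => expand_A f)) -mulr_sumr -(big_morph Posz PoszD (erefl _)).
by rewrite -card_pred_sum card_edge_constant card_ord -!natz natrX -mulrA -exprD.
Qed.

Definition weak_col_poly : {poly int} :=
  \sum_(A : {set E}) ((-1) ^+ #|A|)%:P * 'X^(#|E| - #|A| + ncomp ends A).

Lemma weak_col_polyE lam : (0 < lam)%N ->
  weak_col_poly.[lam%:Z] = (num_weak_col (HG_edge ends) lam)%:Z.
Proof.
move=> lam_gt0; rewrite num_weak_col_HG_expand // horner_sum.
by apply: eq_bigr => A _; rewrite hornerCM hornerXn.
Qed.

End WeakColourings.

Section MixedGraphs.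
Variables (V E : finType) (ends : E -> V * V).
Implicit Types (S C : {set E}) (o : {ffun E -> bool}) (e a : E) (x y : V).

Local Notation tl o := (otail ends o).
Local Notation hd o := (Defs.ohead ends o).

Definition oriented_adj S o : rel V :=
  fun x y => [exists a in S, (tl o a == x) && (hd o a == y)].

(* Edges of C are traversable both ways: they stand for contracted edges. *)
Definition mixed_adj S C o : rel V := fun x y => oriented_adj S o x y || adjA ends C x y.

Definition cyclic_orient S C o := cyclic_arcs (mem S) (tl o) (hd o) (mixed_adj S C o).

(* Only the orientation of the edges of S matters, so o is fixed to true elsewhere. *)
Definition num_cyclic_orient S C : nat :=
  \sum_(o : {ffun E -> bool}) ([forall a, (a \notin S) ==> o a] && cyclic_orient S C o).

Definition signed_comp_sum S C : int :=
  (\sum_(A : {set E} | A \subset S) (-1) ^+ (ncomp ends (A :|: C) + ncomp ends (S :|: C)))%R.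

Definition flip e o : {ffun E -> bool} := [ffun a => (a == e) (+) o a].

Lemma flip_eq e o : flip e o e = ~~ o e.
Proof. by rewrite ffunE eqxx. Qed.

Lemma flip_neq e o a : a != e -> flip e o a = o a.
Proof. by rewrite ffunE => /negbTE ->. Qed.

Lemma flipK e : involutive (flip e).
Proof. by move=> o; apply/ffunP => a; rewrite !ffunE addbA addbb. Qed.

Lemma flip_setD1 S e o : {in S :\ e, flip e o =1 o}.
Proof. by move=> a; rewrite in_setD1 => /andP [ae _]; apply: flip_neq. Qed.

Lemma connect_adjA_tl_hd F o e :
  connect (adjA ends F) (tl o e) (hd o e) = connect (adjA ends F) (ends e).1 (ends e).2.
Proof. by rewrite /otail /Defs.ohead; case: (o e); rewrite // connect_adjA_sym. Qed.

Lemma mixed_adj_setD1 S C o e : e \in S ->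
  mixed_adj S C o =2 add_arc (mixed_adj (S :\ e) C o) (tl o e) (hd o e).
Proof.
move=> eS x y; rewrite /mixed_adj /add_arc orbAC; congr (_ || _).
apply/existsP/orP => [[a] | [/existsP [a] | /andP [/eqP <- /eqP <-]]].
- case/andP=> aS tlhd; have [ae | ae] := eqVneq a e; first by right; rewrite -ae.
  by left; apply/existsP; exists a; rewrite in_setD1 ae aS.
- by case/andP => /setD1P [_ aS] tlhd; exists a; rewrite aS.
- by exists e; rewrite eS !eqxx.
Qed.

Lemma mixed_adj_setU1 S C o e : mixed_adj S (e |: C) o =2
  add_arc (add_arc (mixed_adj S C o) (ends e).1 (ends e).2) (ends e).2 (ends e).1.
Proof. by move=> x y; rewrite /mixed_adj adjA_setU1 /add_arc -!orbA. Qed.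

Lemma eq_mixed_adj S C o1 o2 : {in S, o1 =1 o2} -> mixed_adj S C o1 =2 mixed_adj S C o2.
Proof.
move=> o12 x y; congr (_ || _); apply: eq_existsb => a.
by case aS: (a \in S); rewrite //= /otail /Defs.ohead o12.
Qed.

Lemma connect_mixed_adjA S C o x y :
  connect (mixed_adj S C o) x y -> connect (adjA ends (S :|: C)) x y.
Proof.
apply: connect_sub => x' y' /orP [/existsP [a /andP [aS /andP [/eqP <- /eqP <-]]] | Cxy].
  apply/connect1/existsP; exists a; rewrite in_setU aS /otail /Defs.ohead.
  by case: (o a); rewrite -surjective_pairing eqxx ?orbT.
exact: connect_adjA_subset (subsetUr S C) (connect1 Cxy).
Qed.

Lemma cyclic_orient_setD1 S C o e : e \in S -> cyclic_orient S C o =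
  cyclic_arcs (mem (S :\ e)) (tl o) (hd o) (mixed_adj S C o) &&
  connect (mixed_adj S C o) (hd o e) (tl o e).
Proof.
move=> eS; apply/forall_inP/andP => [back | [/forall_inP back back_e] a aS].
  by split; [apply/forall_inP => a /setD1P [_ /back] | apply: back].
by have [-> // | ae] := eqVneq a e; apply: back; rewrite in_setD1 ae.
Qed.

Lemma cyclic_orient_bridge S C o e : e \in S ->
  ~~ connect (adjA ends (S :\ e :|: C)) (ends e).1 (ends e).2 -> cyclic_orient S C o = false.
Proof.
move=> eS bridge; rewrite (cyclic_orient_setD1 _ _ eS) (eq_connect (mixed_adj_setD1 C o eS)).
rewrite connect_add_arc_rev; apply/negbTE; apply: contra bridge => /andP [_].
by move/connect_mixed_adjA; rewrite connect_adjA_sym connect_adjA_tl_hd.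
Qed.

Lemma cyclic_orient_flip S C o e : e \in S -> o e ->
  connect (adjA ends (S :\ e :|: C)) (ends e).1 (ends e).2 ->
  cyclic_orient S C o + cyclic_orient S C (flip e o) =
  cyclic_orient (S :\ e) C o + cyclic_orient (S :\ e) (e |: C) o :> nat.
Proof.
move=> eS oe uv; set u := (ends e).1; set v := (ends e).2.
set R := mixed_adj (S :\ e) C o.
have [tl_e hd_e] : tl o e = u /\ hd o e = v by rewrite /otail /Defs.ohead oe.
have [tl_f hd_f] : tl (flip e o) e = v /\ hd (flip e o) e = u.
  by rewrite /otail /Defs.ohead flip_eq oe.
have same_arcs : cyclic_arcs (mem (S :\ e)) (tl (flip e o)) (hd (flip e o)) =1
                 cyclic_arcs (mem (S :\ e)) (tl o) (hd o).
  by move=> Q; apply: eq_forallb_in => a Sa; rewrite /otail /Defs.ohead (flip_setD1 o Sa).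
have adj_f : mixed_adj S C (flip e o) =2 add_arc R v u.
  move=> x y; rewrite (mixed_adj_setD1 C (flip e o) eS) tl_f hd_f /add_arc.
  by rewrite (eq_mixed_adj C (flip_setD1 o)).
rewrite !(cyclic_orient_setD1 _ _ eS) same_arcs tl_e hd_e tl_f hd_f.
rewrite /cyclic_orient (eq_cyclic_arcs adj_f) (eq_connect adj_f).
rewrite (eq_cyclic_arcs (mixed_adj_setD1 C o eS)) (eq_connect (mixed_adj_setD1 C o eS)).
rewrite (eq_cyclic_arcs (mixed_adj_setU1 _ C o e)) tl_e hd_e -/R -/u -/v.
apply: cyclic_arcs_orient_new_edge => [a /setD1P [ae aS] | back].
  by apply/orP; left; apply/existsP; exists a; rewrite in_setD1 ae aS !eqxx.
suff sub_R x y : connect (adjA ends (S :\ e :|: C)) x y -> connect R x y.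
  by rewrite !sub_R // connect_adjA_sym.
apply: connect_sub => x' y' /existsP [a /andP [/setUP [aS | aC] Hxy]]; last first.
  by apply/connect1/orP; right; apply/existsP; exists a; rewrite aC.
have arc_a : R (tl o a) (hd o a).
  by apply/orP; left; apply/existsP; exists a; rewrite aS !eqxx.
have /forall_inP /(_ a aS) back_a := back.
have [[<- <-] | [<- <-]] : (tl o a = x' /\ hd o a = y') \/ (tl o a = y' /\ hd o a = x').
  rewrite /otail /Defs.ohead; case: (o a); case/orP: Hxy => /eqP ->;
    by [left | right | right | left].
- exact: connect1.
- exact: back_a.
Qed.

End MixedGraphs.

Section DeletionContraction.
Variables (V E : finType) (ends : E -> V * V).
Implicit Types (S C : {set E}) (o : {ffun E -> bool}) (e : E).

Local Notation num_cyclic := (num_cyclic_orient ends).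
Local Notation signed_sum := (signed_comp_sum ends).

Lemma num_cyclic_orient0 C : num_cyclic set0 C = 1.
Proof.
rewrite /num_cyclic_orient (bigD1 [ffun=> true]) //= big1 => [|o not_true].
  have -> : cyclic_orient ends set0 C [ffun=> true] by apply/forall_inP => a; rewrite inE.
  have all_true : [forall a : E, (a \notin set0) ==> [ffun=> true] a].
    by apply/forallP => a; rewrite ffunE implybT.
  by rewrite all_true.
apply/eqP; rewrite eqb0 negb_and; apply/orP; left; apply/negP => /forallP all_o.
by case/eqP: not_true; apply/ffunP => a; rewrite ffunE; have := all_o a; rewrite inE.
Qed.

Lemma num_cyclic_orient_bridge S C e : e \in S ->
  ~~ connect (adjA ends (S :\ e :|: C)) (ends e).1 (ends e).2 -> num_cyclic S C = 0.
Proof.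
move=> eS bridge; rewrite /num_cyclic_orient big1 // => o _.
by rewrite (cyclic_orient_bridge _ eS bridge) andbF.
Qed.

(* Pair each orientation with its flip at e. *)
Lemma num_cyclic_orient_setD1 S C e : e \in S ->
  num_cyclic S C = \sum_(o : {ffun E -> bool}) [forall a, (a \notin S :\ e) ==> o a] *
                          (cyclic_orient ends S C o + cyclic_orient ends S C (flip e o)).
Proof.
move=> eS; rewrite /num_cyclic_orient (bigID (fun o => o e)) /=.
rewrite [X in _ + X](reindex_inj (inv_inj (flipK e))) /=.
rewrite [X in _ + X](eq_bigl (fun o => o e)); last by move=> o; rewrite flip_eq negbK.
rewrite -big_split /= [RHS](bigID (fun o => o e)) /= [X in _ + X]big1 ?addn0; last first.
  move=> o /negbTE oe; apply/eqP; rewrite muln_eq0; apply/orP; left.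
  by rewrite eqb0; apply/forallP => /(_ e); rewrite in_setD1 eqxx oe.
apply: eq_bigr => o oe.
have norm_flip : [forall a, (a \notin S) ==> flip e o a] = [forall a, (a \notin S) ==> o a].
  by apply: eq_forallb => a; have [-> | ae] := eqVneq a e; rewrite ?eS ?(flip_neq _ ae).
have norm_setD1 : [forall a, (a \notin S) ==> o a] = [forall a, (a \notin S :\ e) ==> o a].
  apply: eq_forallb => a; rewrite in_setD1 negb_and negbK.
  by have [-> | _] := eqVneq a e; rewrite /= ?oe ?implybT.
by rewrite norm_flip norm_setD1; case: [forall a, _]; rewrite ?mul1n ?mul0n.
Qed.

Lemma num_cyclic_orient_contract S C e : e \in S ->
  connect (adjA ends (S :\ e :|: C)) (ends e).1 (ends e).2 ->
  num_cyclic S C = num_cyclic (S :\ e) C + num_cyclic (S :\ e) (e |: C).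
Proof.
move=> eS uv; rewrite (num_cyclic_orient_setD1 _ eS) /num_cyclic_orient -big_split.
apply: eq_bigr => o _; have [norm | //] := boolP [forall a, (a \notin S :\ e) ==> o a].
have oe : o e by move/forallP: norm => /(_ e); rewrite in_setD1 eqxx.
by rewrite mul1n cyclic_orient_flip.
Qed.

Local Open Scope ring_scope.

Lemma signed_comp_sum0 C : signed_sum set0 C = 1.
Proof.
rewrite /signed_comp_sum (big_pred1 set0) => [|A]; last by rewrite subset0.
by rewrite -signr_odd addnn odd_double.
Qed.

Lemma signed_comp_sum_bridge S C e : e \in S ->
  ~~ connect (adjA ends (S :\ e :|: C)) (ends e).1 (ends e).2 -> signed_sum S C = 0.
Proof.
move=> eS bridge; rewrite /signed_comp_sum (sum_subset_setD1 _ eS) big1 // => A AS.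
have A_bridge : ~~ connect (adjA ends (A :|: C)) (ends e).1 (ends e).2.
  by apply: contra bridge; apply: connect_adjA_subset; apply: setSU.
by rewrite -setUA (ncomp_setU1_bridge A_bridge) addSn exprS mulN1r addNr.
Qed.

Lemma signed_comp_sum_contract S C e : e \in S ->
  connect (adjA ends (S :\ e :|: C)) (ends e).1 (ends e).2 ->
  signed_sum S C = signed_sum (S :\ e) C + signed_sum (S :\ e) (e |: C).
Proof.
move=> eS uv; have SC : S :|: C = e |: (S :\ e :|: C) by rewrite setUA setD1K.
rewrite /signed_comp_sum (sum_subset_setD1 _ eS) big_split /=.
congr (_ + _); apply: eq_bigr => A _; first by rewrite SC ncomp_setU1_connect.
by rewrite setUCA setUA SC setUCA setUA.
Qed.

Lemma signed_comp_sumE S C : signed_sum S C = (num_cyclic S C)%:Z.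
Proof.
have [k ltSk] := ubnP #|S|; elim: k => // k IH in S C ltSk *.
have [-> | [e eS]] := set_0Vmem S; first by rewrite signed_comp_sum0 num_cyclic_orient0.
have ltS'k : (#|S :\ e| < k)%N by rewrite -ltnS (leq_trans _ ltSk) // (cardsD1 e S) eS.
have [uv | bridge] := boolP (connect (adjA ends (S :\ e :|: C)) (ends e).1 (ends e).2).
  by rewrite (signed_comp_sum_contract eS uv) (num_cyclic_orient_contract eS uv) PoszD !IH.
by rewrite (signed_comp_sum_bridge eS bridge) (num_cyclic_orient_bridge eS bridge).
Qed.

End DeletionContraction.

Section DirectedCycles.
Variables (V E : finType) (ends : E -> V * V) (o : {ffun E -> bool}).

Local Notation tl := (otail ends o).
Local Notation hd := (Defs.ohead ends o).
Local Notation arc_adj := (oriented_adj ends setT o).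
Local Notation consecutive := (fun a b : E => hd a == tl b).

Lemma connect_arc_path a q : path consecutive a q -> connect arc_adj (hd a) (hd (last a q)).
Proof.
elim: q a => [|b q IH] a /=; first by rewrite connect0.
case/andP => /eqP ab /IH; apply: connect_trans; apply: connect1.
by apply/existsP; exists b; rewrite in_setT ab !eqxx.
Qed.

Lemma arc_path_connect x p a : path arc_adj x p -> hd a = x ->
  exists q, [/\ path consecutive a q, hd (last a q) = last x p & map tl q = belast x p].
Proof.
elim: p x a => [|y p IH] x a /=; first by move=> _ ax; exists [::]; rewrite /= ax.
case/andP => /existsP [b /andP [_ /andP [/eqP bx /eqP b_y]]] /IH /(_ b_y) [q [qP qlast qtl]] ax.
by exists (b :: q); rewrite /= qP qlast qtl bx ax eqxx.
Qed.

Lemma arc_in_dir_cycleE e : arc_in_dir_cycle ends o e = connect arc_adj (hd e) (tl e).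
Proof.
apply/idP/idP => [/existsP [n /existsP [t /andP [te /and3P [_ _ cyc]]]] |].
  have [i s' rot_t] := rot_to te.
  move: cyc; rewrite -(rot_cycle i) rot_t /= rcons_path => /andP [sP /eqP slast].
  by have := connect_arc_path sP; rewrite slast.
case/connectP => p0 p0P p0last; move: p0last; case: (shortenP p0P) => p pP p_uniq _ plast.
have [q [qP qlast qtl]] := arc_path_connect pP (erefl (hd e)).
have s_uniq : uniq (map tl (e :: q)).
  by rewrite /= qtl plast; move: p_uniq; rewrite lastI rcons_uniq.
have size_s : size (e :: q) < #|E|.+1.
  by rewrite ltnS -(card_uniqP (map_uniq s_uniq)); apply: max_card.
apply/existsP; exists (Ordinal size_s); apply/existsP; exists (in_tuple (e :: q)).
rewrite (_ : val (in_tuple (e :: q)) = e :: q) // mem_head /dir_cycle s_uniq /=.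
by rewrite rcons_path qP qlast plast eqxx.
Qed.

End DirectedCycles.

Section Corollary.
Variables (V E : finType) (ends : E -> V * V).
Local Open Scope ring_scope.

Lemma tutte02E : tutte ends (0 : int) 2 = signed_comp_sum ends setT set0.
Proof.
rewrite /tutte /signed_comp_sum [RHS](eq_bigl xpredT) => [|A]; last by rewrite subsetT.
apply: eq_bigr => A _; rewrite !setU0 sub0r expr1n mulr1 /rk; apply: signr_odd_eq.
have cA := ncomp_le_card ends A; have cT := ncomp_subset ends (subsetT A).
have -> : (#|V| - ncomp ends setT - (#|V| - ncomp ends A) = ncomp ends A - ncomp ends setT)%N.
  by lia.
by rewrite oddB // oddD.
Qed.

Lemma weak_col_poly_N1 : (weak_col_poly ends).[-1] =
  (-1) ^+ (#|E| + ncomp ends setT) * signed_comp_sum ends setT set0.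
Proof.
rewrite horner_sum /signed_comp_sum mulr_sumr [RHS](eq_bigl xpredT) => [|A]; last first.
  by rewrite subsetT.
apply: eq_bigr => A _; rewrite hornerCM hornerXn !setU0 -!exprD; apply: signr_odd_eq.
have AE : (#|A| <= #|E|)%N := max_card _.
by rewrite addnA subnKC // !oddD; case: odd; case: odd; case: odd.
Qed.

Lemma num_cyclic_orient_tco : num_cyclic_orient ends setT set0 = num_tco ends.
Proof.
rewrite /num_tco card_pred_sum; apply: eq_bigr => o _.
have -> : [forall a, (a \notin setT) ==> o a] by apply/forallP => a; rewrite in_setT.
congr (nat_of_bool _); apply: eq_forallb => a; rewrite in_setT arc_in_dir_cycleE.
have adjA0 x y : adjA ends set0 x y = false by apply/existsP => -[b]; rewrite inE.
by apply: eq_connect => x y; rewrite /mixed_adj adjA0 orbF.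
Qed.

End Corollary.

Local Open Scope ring_scope.
Unset Implicit Arguments.

Theorem corollary2 (V E : finType) (ends : E -> V * V) :
  exists p : {poly int},
    (forall lam : nat, (0 < lam)%N ->
       p.[lam%:Z] = (num_weak_col (HG_edge ends) lam)%:Z) /\
    `|p.[-1]| = tutte ends (0 : int) 2 /\
    tutte ends (0 : int) 2 = (num_tco ends)%:Z.
Proof.
have tutte_tco : tutte ends (0 : int) 2 = (num_tco ends)%:Z.
  by rewrite tutte02E signed_comp_sumE num_cyclic_orient_tco.
exists (weak_col_poly ends); split; first exact: weak_col_polyE.
split=> //; rewrite weak_col_poly_N1 -tutte02E normrM normrX normrN1 expr1n mul1r.
by rewrite tutte_tco ger0_norm.
Qed.
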